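(* Let $\mu>0$, $c_0>0$, $c_1>0$, $c_2>0$. Then the equation \[ \ln\frac{1-B}{1+B} + \frac{2B}{1-B^2} = \frac{2\mu^2c_2}{c_1} \] has a unique solution $B\in(0,1)$, and, for this $B$, the equation \[ \Bigl(\frac{c_1}{2c_0} -1\Bigr) \ln\frac{1-A}{1+A} + \frac{2}{1+A} \Bigl(\frac{c_1}{2c_0} + \frac{A}{1-A} \Bigr) = \frac{c_1}{c_0(1-B^2)} \] has a unique solution $A\in(0,1)$. Moreover, if $c_1=2c_0$, then $A=B$. *)

From Stdlib Require Import Reals.
Open Scope R_scope.

Definition eqB (mu c1 c2 B : R) : Prop :=
  ln ((1 - B) / (1 + B)) + 2 * B / (1 - B ^ 2) = 2 * mu ^ 2 * c2 / c1.

Definition eqA (c0 c1 B A : R) : Prop :=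
  (c1 / (2 * c0) - 1) * ln ((1 - A) / (1 + A))
  + 2 / (1 + A) * (c1 / (2 * c0) + A / (1 - A))
  = c1 / (c0 * (1 - B ^ 2)).

From Stdlib Require Import Reals Ranalysis5 Lra.
From Coquelicot Require Import Coquelicot.
Open Scope R_scope.

(* Both left-hand sides are continuous on [0, 1) and tend to +oo at 1, because the
   rational term 2x/(1-x^2) beats the logarithm.  The left-hand side of the B-equation
   vanishes at 0 and has derivative 4x^2/(1-x^2)^2 > 0.  Writing k = c1/(2 c0), the
   left-hand side of the A-equation equals 2k at 0 and has derivative of the sign of
   1 - k(1-x): it does not exceed 2k up to max(0, 1 - 1/k) and increases afterwards,
   while the right-hand side 2k/(1-B^2) exceeds 2k.  So each equation crosses its
   level exactly once.  For k = 1 the A-equation reads 2/(1-A^2) = 2/(1-B^2). *)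

Lemma continuity_pt_of_is_derive (f : R -> R) (x l : R) :
  is_derive f x l -> continuity_pt f x.
Proof.
  intros Hf; apply continuity_pt_filterlim.
  apply (ex_derive_continuous f x); now exists l.
Qed.

Lemma is_derive_nonpos_le (f df : R -> R) (a b : R) :
  a <= b ->
  (forall x, a <= x <= b -> is_derive f x (df x)) ->
  (forall x, a <= x <= b -> df x <= 0) ->
  f b <= f a.
Proof.
  intros Hab Hf Hdf.
  destruct (MVT_gen f a b df) as [c [Hc Hmvt]].
  - rewrite Rmin_left, Rmax_right by lra; intros x Hx; apply Hf; lra.
  - rewrite Rmin_left, Rmax_right by lra; intros x Hx.
    now apply (continuity_pt_of_is_derive _ _ (df x)), Hf.
  - rewrite Rmin_left, Rmax_right in Hc by lra.
    pose proof (Hdf c Hc); nra.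
Qed.

Lemma unique_crossing (g : R -> R) (a T : R) :
  0 <= a ->
  (forall x, a <= x < 1 -> continuity_pt g x) ->
  (forall x, 0 <= x <= a -> g x < T) ->
  (forall x y, a < x -> x < y -> y < 1 -> g x < g y) ->
  (exists x, 0 < x < 1 /\ T < g x) ->
  exists z, (0 < z < 1 /\ g z = T) /\
            (forall z', 0 < z' < 1 -> g z' = T -> z' = z).
Proof.
  intros Ha Hcont Hlow Hincr [x1 [Hx1 Hgx1]].
  assert (above_a : forall x, 0 < x < 1 -> T <= g x -> a < x).
  { intros x Hx HTx; destruct (Rlt_or_le a x) as [|Hxa]; auto.
    pose proof (Hlow x (conj (Rlt_le _ _ (proj1 Hx)) Hxa)); lra. }
  pose proof (above_a x1 Hx1 (Rlt_le _ _ Hgx1)) as Hax1.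
  destruct (IVT_interv (fun x => g x - T) a x1) as [z [Hz HgzT]]; auto.
  - intros x Hx; apply continuity_pt_minus; [apply Hcont; lra|].
    apply continuity_pt_const; now intros ? ?.
  - pose proof (Hlow a (conj Ha (Rle_refl a))); lra.
  - lra.
  - assert (Hgz : g z = T) by lra.
    assert (Haz : a <> z) by (intros <-; pose proof (Hlow a (conj Ha (Rle_refl a))); lra).
    exists z; split; [split; [lra | exact Hgz]|].
    intros z' Hz' Hgz'.
    pose proof (above_a z' Hz' (Req_le _ _ (eq_sym Hgz'))).
    destruct (Rtotal_order z' z) as [Hlt | [Heq | Hgt]]; auto.
    + pose proof (Hincr z' z ltac:(lra) Hlt ltac:(lra)); lra.
    + pose proof (Hincr z z' ltac:(lra) Hgt ltac:(lra)); lra.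
Qed.

Definition log_ratio (x : R) : R := ln ((1 - x) / (1 + x)).

Definition lhsB (x : R) : R := log_ratio x + 2 * x / (1 - x ^ 2).

(* With k = c1 / (2 c0), [eqA c0 c1 B A] is convertible to
   [lhsA k A = c1 / (c0 * (1 - B ^ 2))], and [eqB mu c1 c2 B] to [lhsB B = 2 mu^2 c2 / c1]. *)
Definition lhsA (k x : R) : R :=
  (k - 1) * log_ratio x + 2 / (1 + x) * (k + x / (1 - x)).

Lemma log_ratio_dominated (M T : R) : 0 <= M ->
  exists x, 0 < x < 1 /\ T < 2 * x / (1 - x ^ 2) + M * log_ratio x.
Proof.
  intros HM.
  set (w := 4 * M + 2 * Rabs T + 2).
  pose proof (Rabs_pos T); pose proof (RRle_abs T).
  assert (Hw : 2 <= w) by (unfold w; lra).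
  (* At x = (w^2 - 1) / (w^2 + 1) the ratio is 1 / w^2, so the rational term is
     about w^2 / 2 while the logarithm only contributes -2 M ln w >= -2 M (w - 1). *)
  set (z := w ^ 2).
  assert (Hz : 4 <= z) by (unfold z; nra).
  exists ((z - 1) / (z + 1)); unfold log_ratio.
  replace ((1 - (z - 1) / (z + 1)) / (1 + (z - 1) / (z + 1))) with (/ z) by (field; lra).
  replace (2 * ((z - 1) / (z + 1)) / (1 - ((z - 1) / (z + 1)) ^ 2))
    with ((z - 1) / 2 + (z - 1) / (2 * z)) by (field; lra).
  assert (Hlnw : ln w <= w - 1)
    by (pose proof (exp_ineq1_le (ln w)); rewrite exp_ln in *; lra).
  assert (Hlnz : ln (/ z) = - 2 * ln w)
    by (rewrite ln_Rinv by lra; unfold z; rewrite ln_pow by lra; simpl; ring).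
  rewrite Hlnz.
  assert (0 < (z - 1) / (2 * z)) by (apply Rdiv_lt_0_compat; lra).
  split.
  - split; [apply Rdiv_lt_0_compat; lra|].
    apply Rmult_lt_reg_r with (z + 1); [lra|].
    unfold Rdiv; rewrite Rmult_assoc, Rinv_l by lra; lra.
  - unfold z, w in *; nra.
Qed.

Lemma log_ratio_0 : log_ratio 0 = 0.
Proof. unfold log_ratio; replace ((1 - 0) / (1 + 0)) with 1 by field; apply ln_1. Qed.

Lemma log_ratio_lt_0 (x : R) : 0 < x < 1 -> log_ratio x < 0.
Proof.
  intros Hx; unfold log_ratio; rewrite <- ln_1.
  apply ln_increasing; [apply Rdiv_lt_0_compat; lra|].
  apply Rmult_lt_reg_r with (1 + x); [lra|].
  unfold Rdiv; rewrite Rmult_assoc, Rinv_l by lra; lra.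
Qed.

Lemma is_derive_lhsB (x : R) : -1 < x < 1 ->
  is_derive lhsB x (4 * x ^ 2 / (1 - x ^ 2) ^ 2).
Proof.
  intros Hx; unfold lhsB, log_ratio; auto_derive.
  - repeat split; try lra; [apply Rdiv_lt_0_compat; lra | nra].
  - field; repeat split; try lra; nra.
Qed.

Lemma is_derive_lhsA (k x : R) : -1 < x < 1 ->
  is_derive (lhsA k) x (4 * (1 - k * (1 - x)) / ((1 - x) ^ 2 * (1 + x) ^ 2)).
Proof.
  intros Hx; unfold lhsA, log_ratio; auto_derive.
  - repeat split; try lra; apply Rdiv_lt_0_compat; lra.
  - field; lra.
Qed.

Lemma lhsB_0 : lhsB 0 = 0.
Proof. unfold lhsB; rewrite log_ratio_0; field. Qed.

Lemma lhsA_0 (k : R) : lhsA k 0 = 2 * k.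
Proof. unfold lhsA; rewrite log_ratio_0; field. Qed.

Lemma lhsA_1 (x : R) : -1 < x < 1 -> lhsA 1 x = 2 / (1 - x ^ 2).
Proof. intros Hx; unfold lhsA; field; repeat split; nra. Qed.

Lemma lhsB_increasing (x y : R) : 0 < x -> x < y -> y < 1 -> lhsB x < lhsB y.
Proof.
  apply (incr_function lhsB 0 1 (fun t => 4 * t ^ 2 / (1 - t ^ 2) ^ 2)); simpl.
  - intros t Ht0 Ht1; apply is_derive_lhsB; lra.
  - intros t Ht0 Ht1; apply Rdiv_lt_0_compat; [nra|].
    assert (0 < 1 - t ^ 2) by nra; nra.
Qed.

Lemma lhsA_increasing (k x y : R) : 0 < k ->
  Rmax 0 (1 - / k) < x -> x < y -> y < 1 -> lhsA k x < lhsA k y.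
Proof.
  intros Hk.
  apply (incr_function (lhsA k) (Rmax 0 (1 - / k)) 1
           (fun t => 4 * (1 - k * (1 - t)) / ((1 - t) ^ 2 * (1 + t) ^ 2))); simpl.
  - intros t Ht0 Ht1; apply is_derive_lhsA.
    pose proof (Rmax_l 0 (1 - / k)); lra.
  - intros t Ht0 Ht1.
    apply Rmax_Rlt in Ht0 as [Ht0 Htk].
    assert (k * / k = 1) by (field; lra).
    apply Rdiv_lt_0_compat; [nra|].
    assert (0 < (1 - t) ^ 2) by nra; assert (0 < (1 + t) ^ 2) by nra; nra.
Qed.

Lemma lhsA_le_lhsA_0 (k x : R) : 0 < k ->
  0 <= x <= Rmax 0 (1 - / k) -> lhsA k x <= lhsA k 0.
Proof.
  intros Hk [Hx0 Hxk]; apply Rmax_Rle in Hxk as [Hx | Hx].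
  - replace x with 0 by lra; apply Rle_refl.
  - assert (k * / k = 1) by (field; lra).
    assert (0 < / k) by (apply Rinv_0_lt_compat; lra).
    apply (is_derive_nonpos_le _ (fun t => 4 * (1 - k * (1 - t)) / ((1 - t) ^ 2 * (1 + t) ^ 2)));
      [lra | intros t Ht; apply is_derive_lhsA; lra |].
    intros t Ht; unfold Rdiv; apply Rmult_le_0_r; [nra|].
    apply Rlt_le, Rinv_0_lt_compat.
    assert (0 < (1 - t) ^ 2) by nra; assert (0 < (1 + t) ^ 2) by nra; nra.
Qed.

Lemma lhsB_unbounded (T : R) : exists x, 0 < x < 1 /\ T < lhsB x.
Proof.
  destruct (log_ratio_dominated 1 T) as [x [Hx HT]]; [lra|].
  exists x; split; auto; unfold lhsB; lra.
Qed.

Lemma lhsA_unbounded (k T : R) : 0 < k -> exists x, 0 < x < 1 /\ T < lhsA k x.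
Proof.
  intros Hk; destruct (log_ratio_dominated (Rabs (k - 1)) T) as [x [Hx HT]].
  { apply Rabs_pos. }
  exists x; split; auto.
  pose proof (log_ratio_lt_0 x Hx).
  assert (Rabs (k - 1) * log_ratio x <= (k - 1) * log_ratio x).
  { destruct (Rle_or_lt 0 (k - 1)).
    - rewrite Rabs_right by lra; lra.
    - rewrite Rabs_left by lra; nra. }
  assert (0 < 2 * k / (1 + x)) by (apply Rdiv_lt_0_compat; lra).
  replace (lhsA k x) with ((k - 1) * log_ratio x + 2 * k / (1 + x) + 2 * x / (1 - x ^ 2))
    by (unfold lhsA; field; nra).
  lra.
Qed.

Lemma lt_div_one_sub_sq (a x : R) : 0 < a -> 0 < x < 1 -> a < a / (1 - x ^ 2).
Proof.
  intros Ha Hx; assert (Hx2 : 0 < x ^ 2 < 1) by (split; [apply pow_lt|]; nra).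
  apply Rmult_lt_reg_r with (1 - x ^ 2); [lra|].
  unfold Rdiv; rewrite Rmult_assoc, Rinv_l by lra; nra.
Qed.

Theorem lemma1 (mu c0 c1 c2 : R) :
  0 < mu -> 0 < c0 -> 0 < c1 -> 0 < c2 ->
  exists B : R,
    (0 < B < 1 /\ eqB mu c1 c2 B) /\
    (forall B' : R, 0 < B' < 1 -> eqB mu c1 c2 B' -> B' = B) /\
    (exists A : R,
       (0 < A < 1 /\ eqA c0 c1 B A) /\
       (forall A' : R, 0 < A' < 1 -> eqA c0 c1 B A' -> A' = A) /\
       (c1 = 2 * c0 -> A = B)).
Proof.
  intros Hmu Hc0 Hc1 Hc2.
  assert (HK : 0 < 2 * mu ^ 2 * c2 / c1)
    by (apply Rdiv_lt_0_compat; [pose proof (pow_lt mu 2 Hmu); nra | lra]).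
  destruct (unique_crossing lhsB 0 (2 * mu ^ 2 * c2 / c1)) as [B [[HB HlhsB] HBuniq]].
  - apply Rle_refl.
  - intros x Hx; apply (continuity_pt_of_is_derive _ _ _ (is_derive_lhsB x ltac:(lra))).
  - intros x Hx; replace x with 0 by lra; rewrite lhsB_0; exact HK.
  - intros x y Hx; apply lhsB_increasing; lra.
  - apply lhsB_unbounded.
  - exists B; split; [split; assumption|]; split; [exact HBuniq|].
    set (k := c1 / (2 * c0)).
    assert (Hk : 0 < k) by (apply Rdiv_lt_0_compat; lra).
    assert (HT : c1 / (c0 * (1 - B ^ 2)) = 2 * k / (1 - B ^ 2))
      by (unfold k; field; split; nra).
    destruct (unique_crossing (lhsA k) (Rmax 0 (1 - / k)) (c1 / (c0 * (1 - B ^ 2))))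
      as [A [[HA HlhsA] HAuniq]].
    + apply Rmax_l.
    + intros x Hx; pose proof (Rmax_l 0 (1 - / k)).
      apply (continuity_pt_of_is_derive _ _ _ (is_derive_lhsA k x ltac:(lra))).
    + intros x Hx; rewrite HT.
      apply Rle_lt_trans with (lhsA k 0); [now apply lhsA_le_lhsA_0|].
      rewrite lhsA_0; apply lt_div_one_sub_sq; lra.
    + intros x y Hx; now apply lhsA_increasing.
    + now apply lhsA_unbounded.
    + exists A; split; [split; assumption|]; split; [exact HAuniq|].
      intros Hc; symmetry; apply HAuniq; [exact HB|].
      assert (Hk1 : k = 1) by (unfold k; rewrite Hc; field; lra).
      change (lhsA k B = c1 / (c0 * (1 - B ^ 2))).
      rewrite HT, Hk1, lhsA_1 by lra; field; nra.
Qed.
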